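(* Let $G=(V,E)$ be a directed graph without parallel edges, with integer edge capacities in $\{1,\dots,U\}$ and root $r\in V$, and let $\lambda$ be the capacity of a minimum $r$-cut. Let $k$ be the minimum number of vertices in a sink component of a minimum $r$-cut. Then either $k=1$ or $\lambda< Uk$.
   Context: For a nonempty set $T\subseteq V\setminus\{r\}$, the $r$-cut with sink component $T$ is the set of edges with head in $T$ and tail outside $T$; its capacity is the total capacity of these edges. A minimum $r$-cut is an $r$-cut of minimum capacity. *)

From mathcomp Require Import all_boot.
Set Implicit Arguments. Unset Strict Implicit. Unset Printing Implicit Defensive.

(* A directed graph without parallel edges on a finite vertex set V is an
   edge relation [E : rel V] (at most one edge u -> v for each ordered pair).
   Capacities are a function [c : V -> V -> nat], relevant only on edges. *)

Definition rcut_sink (V : finType) (r : V) (T : {set V}) : bool :=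
  (T != set0) && (r \notin T).

Definition cut_cap (V : finType) (E : rel V) (c : V -> V -> nat)
    (T : {set V}) : nat :=
  \sum_(u in ~: T) \sum_(v in T | E u v) c u v.

Definition min_rcut (V : finType) (E : rel V) (c : V -> V -> nat) (r : V)
    (T : {set V}) : Prop :=
  rcut_sink r T /\
  forall T' : {set V}, rcut_sink r T' -> cut_cap E c T <= cut_cap E c T'.

From mathcomp Require Import all_boot.
From mathcomp Require Import zify.

Set Implicit Arguments.
Unset Strict Implicit.
Unset Printing Implicit Defensive.

(* Let k = #|T| >= 2 and lambda = cut_cap T.  Every singleton {v} with v in T
   is an r-cut sink that is not minimum (it is smaller than T), so its
   capacity is at least lambda + 1.  Summing these capacities over v in T
   counts each edge entering T once and each of the at most k (k - 1) edges
   inside T once, so k (lambda + 1) <= lambda + k (k - 1) U, which forces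
   lambda < U k. *)

Section SingletonCuts.

Variables (V : finType) (E : rel V) (c : V -> V -> nat).

Definition inner_cap (T : {set V}) : nat :=
  \sum_(v in T) \sum_(u in T :\ v | E u v) c u v.

Lemma cut_cap_set1 (v : V) :
  cut_cap E c [set v] = \sum_(u in [set~ v] | E u v) c u v.
Proof.
rewrite /cut_cap big_mkcondr /=; apply: eq_bigr => u _.
by rewrite big_mkcondr big_set1.
Qed.

Lemma cut_cap_exchange (T : {set V}) :
  cut_cap E c T = \sum_(v in T) \sum_(u in ~: T | E u v) c u v.
Proof.
rewrite /cut_cap (exchange_big_dep (mem T)) /=; last by move=> u v _ /andP[].
by apply: eq_bigr => v vT; apply: eq_bigl => u; rewrite vT.
Qed.

Lemma sum_cut_cap_set1 (T : {set V}) :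
  \sum_(v in T) cut_cap E c [set v] = cut_cap E c T + inner_cap T.
Proof.
rewrite cut_cap_exchange /inner_cap -big_split /=.
apply: eq_bigr => v vT; rewrite cut_cap_set1 (bigID (mem T)) /= addnC.
congr (_ + _); apply: eq_bigl => u; rewrite !inE.
  by case: (eqVneq u v) => [->|_]; rewrite ?eqxx ?vT //= andbC.
by rewrite andbAC.
Qed.

Lemma inner_cap_le (U : nat) (T : {set V}) :
  (forall u v, E u v -> c u v <= U) -> inner_cap T <= #|T| * (#|T|.-1 * U).
Proof.
move=> hcap; rewrite -sum_nat_const; apply: leq_sum => v vT.
apply: (@leq_trans (\sum_(u in T :\ v) U)).
  by rewrite big_mkcondr /=; apply: leq_sum => u _; case: ifP => // /hcap.
by rewrite sum_nat_const (cardsD1 v T) vT.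
Qed.

Lemma rcut_sink_set1 (r v : V) (T : {set V}) :
  rcut_sink r T -> v \in T -> rcut_sink r [set v].
Proof.
case/andP=> _ rT vT; apply/andP; split; first by apply/set0Pn; exists v; rewrite inE.
by rewrite inE; apply: contraNneq rT => ->.
Qed.

Lemma min_rcut_set1 (r v : V) (T : {set V}) :
  min_rcut E c r T -> v \in T -> cut_cap E c [set v] <= cut_cap E c T ->
  min_rcut E c r [set v].
Proof.
case=> sT minT vT le_vT; split; first exact: rcut_sink_set1 sT vT.
by move=> T' sT'; apply: leq_trans le_vT (minT _ sT').
Qed.

End SingletonCuts.

Theorem lemma2p2 (V : finType) (E : rel V) (c : V -> V -> nat) (U : nat)
    (r : V)
    (hcap : forall u v, E u v -> 1 <= c u v <= U)
    (T : {set V})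
    (hTmin : min_rcut E c r T)
    (hTsmall : forall T' : {set V}, min_rcut E c r T' -> #|T| <= #|T'|) :
  #|T| = 1 \/ cut_cap E c T < U * #|T|.
Proof.
case: (eqVneq #|T| 1) => [-> | k_neq1]; [by left | right].
have k_gt0 : 0 < #|T| by rewrite card_gt0; case/andP: hTmin.1.
have k_gt1 : 1 < #|T| by rewrite ltn_neqAle eq_sym k_neq1.
have singleton_gt v : v \in T -> cut_cap E c T < cut_cap E c [set v].
  move=> vT; rewrite ltnNge; apply/negP => /(min_rcut_set1 hTmin vT) min_v.
  by have := hTsmall _ min_v; rewrite cards1 leqNgt k_gt1.
have lower : #|T| * (cut_cap E c T).+1 <= \sum_(v in T) cut_cap E c [set v].
  by rewrite -sum_nat_const; apply: leq_sum => v /singleton_gt.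
have upper : inner_cap E c T <= #|T| * (#|T|.-1 * U).
  by apply: inner_cap_le => u v /hcap /andP[].
rewrite sum_cut_cap_set1 in lower.
by move: lower upper k_gt1; clear; nia.
Qed.
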